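(* Let $d\ge2$, $n=2$, and $\mathcal T=\sum_{k=1}^3\mathbf v_k^{\otimes d}$. (i) If $d\in\{2,4\}$, every $\mathbf v\in\mathbb R^2$ with $\|\mathbf v\|=1$ is an eigenvector of $\mathcal T$, with eigenvalue $\mu=\frac32$ if $d=2$ and $\mu=\frac98$ if $d=4$. (ii) If $d\ge6$ is even, the normalized eigenpairs of $\mathcal T$ are exactly the $12$ pairs $(\pm\mathbf v_k,\,1+2^{1-d})$, $1\le k\le3$, and $\big((\mathbf v_k+2\mathbf v_j)/\sqrt3,\,3^{d/2}2^{1-d}\big)$, $1\le k\ne j\le3$. (iii) If $d\ge3$ is odd, the normalized eigenpairs of $\mathcal T$ are exactly the $6$ pairs $(\mathbf v_k,\,1-2^{1-d})$ and $(-\mathbf v_k,\,-(1-2^{1-d}))$, $1\le k\le3$.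
   Context: For $n=2$ the simplex frame is $\mathbf v_1=(1,0)^\top$, $\mathbf v_2=(-\frac12,\frac{\sqrt3}2)^\top$, $\mathbf v_3=(-\frac12,-\frac{\sqrt3}2)^\top$ (unit vectors with pairwise inner product $-\frac12$ and sum $\mathbf 0$; up to an orthogonal transformation this is the general definition $\mathbf v_k=\sqrt{1+\frac1n}\mathbf e_k-n^{-3/2}(\sqrt{n+1}-1)\mathbf 1_n$, $\mathbf v_{n+1}=-n^{-1/2}\mathbf 1_n$). $\mathcal T\cdot\mathbf v^{d-1}=\sum_{k=1}^3\langle\mathbf v,\mathbf v_k\rangle^{d-1}\mathbf v_k$. A normalized eigenpair is $(\mathbf v,\mu)$ with $\|\mathbf v\|=1$ and $\mathcal T\cdot\mathbf v^{d-1}=\mu\mathbf v$. *)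

From Stdlib Require Import Reals Lra Lia.
Open Scope R_scope.

Definition vec2 := (R * R)%type.

Definition vadd (u w : vec2) : vec2 := (fst u + fst w, snd u + snd w).
Definition vscale (a : R) (u : vec2) : vec2 := (a * fst u, a * snd u).
Definition inner (u w : vec2) : R := fst u * fst w + snd u * snd w.
Definition vnorm (u : vec2) : R := sqrt (inner u u).

Inductive idx : Type := I1 | I2 | I3.

Definition frame (k : idx) : vec2 :=
  match k with
  | I1 => (1, 0)
  | I2 => (- (1/2), sqrt 3 / 2)
  | I3 => (- (1/2), - (sqrt 3 / 2))
  end.

(* T . v^(d-1) = sum_{k=1}^3 <v, v_k>^(d-1) v_k  for T = sum_k v_k^{(x) d}. *)
Definition Tapply (d : nat) (v : vec2) : vec2 :=
  vadd (vscale (inner v (frame I1) ^ (d - 1)) (frame I1))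
   (vadd (vscale (inner v (frame I2) ^ (d - 1)) (frame I2))
         (vscale (inner v (frame I3) ^ (d - 1)) (frame I3))).

Definition is_eigenpair (d : nat) (v : vec2) (mu : R) : Prop :=
  vnorm v = 1 /\ Tapply d v = vscale mu v.

(* Write a, b, c for the frame coordinates <v, v_k> of a unit vector v: they
   satisfy a + b + c = 0 and ab + bc + ca = -3/4, so they are the roots of
   t^3 - 3/4 t - abc.  The vector T v is parallel to v iff the alternant
   a^(d-1) (b - c) + b^(d-1) (c - a) + c^(d-1) (a - b), which is sqrt 3 times
   det(v, T v), vanishes.  For d >= 3 the alternant factors as
   -(a - b)(b - c)(c - a) h_(d-3)(a, b, c), and the complete homogeneous
   polynomials obey h_(n+3) = 3/4 h_(n+1) + abc h_n.  Hence h_n > 0 for even n,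
   while h_n = 0 for an odd n >= 3 forces abc = 0.  So an eigenvector has two
   equal coordinates (it is +-v_k) or, when d is even, a zero coordinate (it is
   (v_k + 2 v_j)/sqrt 3); conversely these are eigenvectors, whose coordinates
   lie in {1, -1/2} resp. {0, +-sqrt 3/2}.  Finally the frame is tight,
   sum_k <v, v_k> v_k = 3/2 v, which with t^3 = 3/4 t + abc gives T v = 3/2 v for
   d = 2 and T v = 9/8 v for d = 4. *)

From Stdlib Require Import Reals Lra Lia.
Open Scope R_scope.

Definition alternant (a b c : R) (n : nat) : R :=
  a ^ n * (b - c) + b ^ n * (c - a) + c ^ n * (a - b).

(* With [p = -(ab+bc+ca)] and [q = abc], [complete_hom p q n] is the complete
   homogeneous symmetric polynomial h_n(a,b,c) in the case a + b + c = 0. *)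
Fixpoint complete_hom (p q : R) (n : nat) : R :=
  match n with
  | O => 1
  | S O => 0
  | S (S O) => p
  | S (S (S k as k1)) => p * complete_hom p q k1 + q * complete_hom p q k
  end.

Lemma complete_hom_rec p q n :
  complete_hom p q (n + 3) = p * complete_hom p q (n + 1) + q * complete_hom p q n.
Proof. now replace (n + 3)%nat with (S (S (S n))) by lia; rewrite Nat.add_1_r. Qed.

Lemma rec3_ext (u w : nat -> R) (p q : R) :
  (forall n, u (n + 3)%nat = p * u (n + 1)%nat + q * u n) ->
  (forall n, w (n + 3)%nat = p * w (n + 1)%nat + q * w n) ->
  u 0%nat = w 0%nat -> u 1%nat = w 1%nat -> u 2%nat = w 2%nat ->
  forall n, u n = w n.
Proof.
  intros hu hw h0 h1 h2.
  assert (hwindow : forall n,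
            u n = w n /\ u (n + 1)%nat = w (n + 1)%nat /\ u (n + 2)%nat = w (n + 2)%nat).
  { induction n as [|n (IH0 & IH1 & IH2)]; [auto|].
    replace (S n + 2)%nat with (n + 3)%nat by lia.
    replace (S n + 1)%nat with (n + 2)%nat by lia.
    replace (S n) with (n + 1)%nat by lia.
    rewrite hu, hw, IH0, IH1; auto. }
  intro n; apply hwindow.
Qed.

Lemma sum0_cubic_root a b c t : a + b + c = 0 -> t = a \/ t = b \/ t = c ->
  t ^ 3 = - (a * b + b * c + c * a) * t + a * b * c.
Proof. intros h ht; replace c with (- a - b) in * by lra; destruct ht as [-> | [-> | ->]]; ring. Qed.

Lemma alternant_rec a b c n : a + b + c = 0 ->
  alternant a b c (n + 3) =
  - (a * b + b * c + c * a) * alternant a b c (n + 1) + a * b * c * alternant a b c n.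
Proof.
  intro h; unfold alternant; rewrite !pow_add, !(sum0_cubic_root a b c) by tauto; ring.
Qed.

Lemma alternant_factor a b c n : a + b + c = 0 ->
  alternant a b c (n + 2) =
  alternant a b c 2 * complete_hom (- (a * b + b * c + c * a)) (a * b * c) n.
Proof.
  intro h; revert n.
  apply (rec3_ext (fun n => alternant a b c (n + 2))
                  (fun n => alternant a b c 2 * complete_hom _ _ n)
                  (- (a * b + b * c + c * a)) (a * b * c)).
  - intro n; cbv beta.
    replace (n + 3 + 2)%nat with (n + 2 + 3)%nat by lia.
    replace (n + 1 + 2)%nat with (n + 2 + 1)%nat by lia.
    now apply alternant_rec.
  - intro n; cbv beta; rewrite complete_hom_rec; ring.
  - simpl; ring.
  - unfold alternant; simpl; replace c with (- a - b) by lra; ring.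
  - unfold alternant; simpl; replace c with (- a - b) by lra; ring.
Qed.

Lemma complete_hom_even_pos p q : 0 < p -> forall n,
  0 < complete_hom p q (2 * n) /\ 0 <= q * complete_hom p q (2 * n + 1) /\
  0 < complete_hom p q (2 * n + 2).
Proof.
  intros hp n; induction n as [|n (IH0 & IH1 & IH2)]; [simpl; lra|].
  replace (2 * S n)%nat with (2 * n + 2)%nat by lia.
  replace (2 * n + 2 + 1)%nat with (2 * n + 3)%nat by lia.
  replace (2 * n + 2 + 2)%nat with (2 * n + 1 + 3)%nat by lia.
  rewrite !complete_hom_rec.
  replace (2 * n + 1 + 1)%nat with (2 * n + 2)%nat by lia.
  assert (0 <= q * q) by nra.
  repeat split; [exact IH2 | | nra].
  replace (q * _) with (p * (q * complete_hom p q (2 * n + 1)) + q * q * complete_hom p q (2 * n))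
    by ring.
  nra.
Qed.

Lemma complete_hom_odd_eq0 p q n : 0 < p ->
  complete_hom p q (2 * n + 3) = 0 -> q = 0.
Proof.
  intros hp h.
  destruct (complete_hom_even_pos p q hp n) as (h0 & h1 & _).
  rewrite complete_hom_rec in h.
  assert (hsum : p * (q * complete_hom p q (2 * n + 1)) + q * q * complete_hom p q (2 * n) = 0)
    by (transitivity (q * 0); [rewrite <- h; ring | ring]).
  (* both summands of [hsum] are nonnegative *)
  assert (hsq : q * q * complete_hom p q (2 * n) = 0) by (assert (0 <= q * q) by nra; nra).
  destruct (Rmult_integral _ _ hsq) as [hq | hh]; [nra | lra].
Qed.

Lemma sqrt3_sqr : sqrt 3 * sqrt 3 = 3.
Proof. apply sqrt_sqrt; lra. Qed.

Lemma sqrt3_pos : 0 < sqrt 3.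
Proof. apply sqrt_lt_R0; lra. Qed.

Lemma vnorm_eq1 v : vnorm v = 1 <-> inner v v = 1.
Proof.
  unfold vnorm; split; intro h; [|now rewrite h, sqrt_1].
  rewrite <- sqrt_1 in h; apply sqrt_inj in h; [exact h | | lra].
  destruct v as [x y]; unfold inner; simpl; nra.
Qed.

Lemma frame_coords x y :
  inner (x, y) (frame I1) = x /\
  inner (x, y) (frame I2) = - (1/2) * x + sqrt 3 / 2 * y /\
  inner (x, y) (frame I3) = - (1/2) * x - sqrt 3 / 2 * y.
Proof. unfold inner; simpl; repeat split; field. Qed.

Lemma frame_coords_sum v :
  inner v (frame I1) + inner v (frame I2) + inner v (frame I3) = 0.
Proof. destruct v as [x y]; unfold inner; simpl; field. Qed.

Lemma frame_coords_e2 v :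
  - (inner v (frame I1) * inner v (frame I2) + inner v (frame I2) * inner v (frame I3)
     + inner v (frame I3) * inner v (frame I1)) = 3/4 * inner v v.
Proof.
  destruct v as [x y]; unfold inner; simpl.
  pose proof sqrt3_sqr; nra.
Qed.

Lemma alternant_det d v :
  alternant (inner v (frame I1)) (inner v (frame I2)) (inner v (frame I3)) (d - 1) =
  sqrt 3 * (snd v * fst (Tapply d v) - fst v * snd (Tapply d v)).
Proof.
  destruct v as [x y]; unfold alternant, Tapply.
  destruct (frame_coords x y) as (-> & -> & ->).
  unfold vadd, vscale; simpl.
  set (P := x ^ (d - 1)).
  set (Q := (- (1/2) * x + sqrt 3 / 2 * y) ^ (d - 1)).
  set (S := (- (1/2) * x - sqrt 3 / 2 * y) ^ (d - 1)).
  clearbody P Q S; apply Rminus_diag_uniq.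
  transitivity ((sqrt 3 * sqrt 3 - 3) / 2 * x * (Q - S)); [field | rewrite sqrt3_sqr; field].
Qed.

Lemma eigenvalue_unique d v mu mu' :
  is_eigenpair d v mu -> is_eigenpair d v mu' -> mu = mu'.
Proof.
  intros [hn he] [_ he']; apply vnorm_eq1 in hn.
  rewrite he in he'; destruct v as [x y]; unfold vscale, inner in *; simpl in *.
  injection he' as ex ey.
  replace mu with (mu * (x * x + y * y)) by (rewrite hn; ring).
  replace mu' with (mu' * (x * x + y * y)) by (rewrite hn; ring).
  replace (mu * _) with (mu * x * x + mu * y * y) by ring.
  rewrite ex, ey; ring.
Qed.

Lemma vnorm_opp v : vnorm (vscale (-1) v) = vnorm v.
Proof. destruct v as [x y]; unfold vnorm, vscale, inner; simpl; f_equal; ring. Qed.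

Lemma Tapply_opp d v : Tapply d (vscale (-1) v) = vscale ((-1) ^ (d - 1)) (Tapply d v).
Proof.
  assert (hinner : forall w, inner (vscale (-1) v) w = -1 * inner v w)
    by (intro w; unfold inner, vscale; simpl; ring).
  unfold Tapply; rewrite !hinner, !Rpow_mult_distr.
  unfold vadd, vscale; simpl; f_equal; ring.
Qed.

Lemma eigenpair_opp d v mu : (1 <= d)%nat ->
  is_eigenpair d v mu -> is_eigenpair d (vscale (-1) v) ((-1) ^ d * mu).
Proof.
  intros hd [hn he]; split; [now rewrite vnorm_opp|].
  destruct d as [|d]; [lia|].
  rewrite Tapply_opp, he; destruct v as [x y]; unfold vscale; simpl.
  rewrite Nat.sub_0_r; f_equal; ring.
Qed.

Lemma frame_tight v :
  vadd (vscale (inner v (frame I1)) (frame I1))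
    (vadd (vscale (inner v (frame I2)) (frame I2))
          (vscale (inner v (frame I3)) (frame I3))) = vscale (3/2) v.
Proof.
  destruct v as [x y]; unfold vadd, vscale, inner; simpl; f_equal; [field|].
  apply Rminus_diag_uniq.
  transitivity ((sqrt 3 * sqrt 3 - 3) / 2 * y); [field | rewrite sqrt3_sqr; field].
Qed.

(* The constant term [e] drops out because the frame vectors sum to zero. *)
Lemma Tapply_of_coord_powers d v c e :
  (forall k, inner v (frame k) ^ (d - 1) = c * inner v (frame k) + e) ->
  Tapply d v = vscale (3/2 * c) v.
Proof.
  intro hpow; pose proof (frame_tight v) as ht.
  unfold Tapply; rewrite !hpow.
  set (a := inner v (frame I1)) in *; set (b := inner v (frame I2)) in *;
    set (c' := inner v (frame I3)) in *; clearbody a b c'.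
  destruct v as [x y]; unfold vadd, vscale in *; simpl in *.
  injection ht as ex ey; f_equal;
    [transitivity (c * (3/2 * x)) | transitivity (c * (3/2 * y))];
    try ring; [rewrite <- ex | rewrite <- ey]; field.
Qed.

Lemma Tapply_2 v : Tapply 2 v = vscale (3/2) v.
Proof.
  rewrite (Tapply_of_coord_powers 2 v 1 0); [f_equal; ring|].
  intro k; simpl; ring.
Qed.

Lemma Tapply_4 v : Tapply 4 v = vscale (9/8 * inner v v) v.
Proof.
  rewrite (Tapply_of_coord_powers 4 v (3/4 * inner v v)
             (inner v (frame I1) * inner v (frame I2) * inner v (frame I3)));
    [f_equal; field|].
  intro k; rewrite <- frame_coords_e2.
  apply sum0_cubic_root; [apply frame_coords_sum|].
  destruct k; tauto.
Qed.

Lemma inner_frame_same k : inner (frame k) (frame k) = 1.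
Proof. pose proof sqrt3_sqr; destruct k; unfold inner; simpl; nra. Qed.

Lemma inner_frame_diff k j : k <> j -> inner (frame k) (frame j) = - (1/2).
Proof. pose proof sqrt3_sqr; destruct k, j; try congruence; unfold inner; simpl; nra. Qed.

Lemma eigenpair_frame d k : is_eigenpair d (frame k) (1 - (- (1/2)) ^ (d - 1)).
Proof.
  split; [apply vnorm_eq1, inner_frame_same|]; unfold Tapply.
  destruct k; rewrite inner_frame_same, !inner_frame_diff by discriminate; rewrite pow1;
    unfold vadd, vscale; simpl; f_equal; field.
Qed.

Definition frame_mix (k j : idx) : vec2 :=
  vscale (/ sqrt 3) (vadd (frame k) (vscale 2 (frame j))).

Lemma inner_frame_mix k j l :
  inner (frame_mix k j) (frame l) =
  / sqrt 3 * (inner (frame k) (frame l) + 2 * inner (frame j) (frame l)).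
Proof. unfold frame_mix, vadd, vscale, inner; simpl; ring. Qed.

Lemma pow_odd_of_cube x t w : x ^ 3 = t * x -> x ^ (2 * w + 1) = t ^ w * x.
Proof.
  intro hx; induction w as [|w IH]; [simpl; ring|].
  replace (2 * S w + 1)%nat with (2 * w + 1 + 2)%nat by lia.
  rewrite pow_add, IH.
  transitivity (t ^ w * x ^ 3); [ring | rewrite hx; simpl; ring].
Qed.

(* Each frame coordinate of [frame_mix k j] is 0 or +-r with r^2 = 3/4. *)
Lemma frame_mix_coord_cube k j l : k <> j ->
  inner (frame_mix k j) (frame l) ^ 3 = 3/4 * inner (frame_mix k j) (frame l).
Proof.
  intro hkj; rewrite inner_frame_mix.
  set (r := / sqrt 3 * (3/2)).
  assert (hr : r * r = 3/4).
  { unfold r; pose proof sqrt3_pos.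
    replace (/ sqrt 3 * (3/2) * (/ sqrt 3 * (3/2))) with (9/4 / (sqrt 3 * sqrt 3))
      by (field; lra).
    rewrite sqrt3_sqr; field. }
  assert (hcoord : / sqrt 3 * (inner (frame k) (frame l) + 2 * inner (frame j) (frame l)) = 0
                   \/ / sqrt 3 * (inner (frame k) (frame l) + 2 * inner (frame j) (frame l)) = r
                   \/ / sqrt 3 * (inner (frame k) (frame l) + 2 * inner (frame j) (frame l)) = - r).
  { unfold r.
    destruct k, j, l; try congruence;
      rewrite ?inner_frame_same, ?inner_frame_diff by discriminate;
      first [ left; field | right; left; field | right; right; field ];
      apply Rgt_not_eq, sqrt3_pos. }
  destruct hcoord as [-> | [-> | ->]]; rewrite <- ?hr; ring.
Qed.

Lemma vnorm_frame_mix k j : k <> j -> vnorm (frame_mix k j) = 1.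
Proof.
  intro hkj; apply vnorm_eq1.
  assert (hexp : forall a u w, inner (vscale a (vadd u (vscale 2 w))) (vscale a (vadd u (vscale 2 w)))
                 = a * a * (inner u u + 4 * inner u w + 4 * inner w w))
    by (intros a [] []; unfold inner, vadd, vscale; simpl; ring).
  unfold frame_mix; rewrite hexp, !inner_frame_same, inner_frame_diff by exact hkj.
  rewrite <- Rinv_mult, sqrt3_sqr; field.
Qed.

Lemma eigenpair_frame_mix u k j : (1 <= u)%nat -> k <> j ->
  is_eigenpair (2 * u) (frame_mix k j) (3/2 * (3/4) ^ (u - 1)).
Proof.
  intros hu hkj; split; [now apply vnorm_frame_mix|].
  apply (Tapply_of_coord_powers _ _ _ 0); intro l; rewrite Rplus_0_r.
  replace (2 * u - 1)%nat with (2 * (u - 1) + 1)%nat by lia.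
  now apply pow_odd_of_cube, frame_mix_coord_cube.
Qed.

Lemma unit_equal_coords v : inner v v = 1 ->
  (inner v (frame I1) - inner v (frame I2)) * (inner v (frame I2) - inner v (frame I3)) *
  (inner v (frame I3) - inner v (frame I1)) = 0 ->
  exists k, v = frame k \/ v = vscale (-1) (frame k).
Proof.
  destruct v as [x y]; destruct (frame_coords x y) as (-> & -> & ->).
  unfold inner; simpl; intros hn h.
  pose proof sqrt3_sqr; pose proof sqrt3_pos.
  destruct (Rmult_integral _ _ h) as [h' | hca]; [destruct (Rmult_integral _ _ h') as [hab | hbc]|].
  - assert (hy : y = sqrt 3 * x) by nra.
    assert (hx : x² = (1/2)²) by (unfold Rsqr; subst y; nra).
    exists I3; apply Rsqr_eq in hx as [-> | ->]; [right | left];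
      unfold vscale; simpl; f_equal; subst y; field.
  - assert (hy : y = 0) by nra.
    assert (hx : x² = 1²) by (unfold Rsqr; subst y; nra).
    exists I1; apply Rsqr_eq in hx as [-> | ->]; [left | right];
      unfold vscale; simpl; f_equal; subst y; field.
  - assert (hy : y = - (sqrt 3 * x)) by nra.
    assert (hx : x² = (1/2)²) by (unfold Rsqr; subst y; nra).
    exists I2; apply Rsqr_eq in hx as [-> | ->]; [right | left];
      unfold vscale; simpl; f_equal; subst y; field.
Qed.

Lemma Rinv_sqrt3 : / sqrt 3 = sqrt 3 / 3.
Proof.
  pose proof sqrt3_pos; apply (Rmult_eq_reg_l (sqrt 3)); [|lra].
  rewrite Rinv_r by lra; unfold Rdiv; rewrite <- Rmult_assoc, sqrt3_sqr; field.
Qed.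

Lemma unit_zero_coord v : inner v v = 1 ->
  inner v (frame I1) * inner v (frame I2) * inner v (frame I3) = 0 ->
  exists k j, k <> j /\ v = frame_mix k j.
Proof.
  destruct v as [x y]; destruct (frame_coords x y) as (-> & -> & ->).
  unfold inner, frame_mix, vadd, vscale; simpl; rewrite Rinv_sqrt3; intros hn h.
  pose proof sqrt3_sqr; pose proof sqrt3_pos.
  destruct (Rmult_integral _ _ h) as [h' | hc]; [destruct (Rmult_integral _ _ h') as [ha | hb]|].
  - assert (hy : y² = 1²) by (unfold Rsqr; subst x; nra).
    apply Rsqr_eq in hy as [-> | ->]; [exists I1, I2 | exists I1, I3];
      (split; [discriminate|]); subst x; simpl; f_equal; nra.
  - assert (hx : x = sqrt 3 * y) by nra.
    assert (hy : y² = (1/2)²) by (unfold Rsqr; subst x; nra).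
    apply Rsqr_eq in hy as [-> | ->]; [exists I2, I1 | exists I2, I3];
      (split; [discriminate|]); subst x; simpl; f_equal; nra.
  - assert (hx : x = - (sqrt 3 * y)) by nra.
    assert (hy : y² = (1/2)²) by (unfold Rsqr; subst x; nra).
    apply Rsqr_eq in hy as [-> | ->]; [exists I3, I2 | exists I3, I1];
      (split; [discriminate|]); subst x; simpl; f_equal; nra.
Qed.

Lemma eigenpair_factor n v mu : is_eigenpair (n + 3) v mu ->
  let a := inner v (frame I1) in let b := inner v (frame I2) in let c := inner v (frame I3) in
  (a - b) * (b - c) * (c - a) * complete_hom (3/4) (a * b * c) n = 0.
Proof.
  intros [hn he] a b c; apply vnorm_eq1 in hn.
  assert (hdet : alternant a b c (n + 2) = 0).
  { replace (n + 2)%nat with (n + 3 - 1)%nat by lia.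
    unfold a, b, c; rewrite alternant_det, he; destruct v; simpl; ring. }
  rewrite alternant_factor in hdet by apply frame_coords_sum.
  unfold a, b, c in hdet; rewrite frame_coords_e2, hn, Rmult_1_r in hdet; fold a b c in hdet.
  replace ((a - b) * (b - c) * (c - a)) with (- alternant a b c 2) by (unfold alternant; simpl; ring).
  rewrite Ropp_mult_distr_l_reverse, hdet; ring.
Qed.

Lemma eigenpair_odd_cases u v mu : (1 <= u)%nat -> is_eigenpair (2 * u + 1) v mu ->
  exists k, v = frame k \/ v = vscale (-1) (frame k).
Proof.
  intros hu he; pose proof he as [hn _]; apply vnorm_eq1 in hn.
  replace (2 * u + 1)%nat with (2 * (u - 1) + 3)%nat in he by lia.
  apply eigenpair_factor in he; cbv zeta in he.
  destruct (complete_hom_even_pos (3/4) (inner v (frame I1) * inner v (frame I2) * inner v (frame I3))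
              ltac:(lra) (u - 1)) as [hpos _].
  apply unit_equal_coords; [exact hn|].
  destruct (Rmult_integral _ _ he); [assumption | lra].
Qed.

Lemma eigenpair_even_cases u v mu : (3 <= u)%nat -> is_eigenpair (2 * u) v mu ->
  (exists k, v = frame k \/ v = vscale (-1) (frame k)) \/
  (exists k j, k <> j /\ v = frame_mix k j).
Proof.
  intros hu he; pose proof he as [hn _]; apply vnorm_eq1 in hn.
  replace (2 * u)%nat with (2 * (u - 3) + 3 + 3)%nat in he by lia.
  apply eigenpair_factor in he; cbv zeta in he.
  destruct (Rmult_integral _ _ he) as [hequal | hhom].
  - left; now apply unit_equal_coords.
  - right; apply unit_zero_coord; [exact hn|].
    apply (complete_hom_odd_eq0 (3/4) _ (u - 3)); [lra | exact hhom].
Qed.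

Lemma pow_neg_half m : (- (1/2)) ^ m = (-1) ^ m * (2 ^ 1 / 2 ^ (m + 1)).
Proof.
  replace (- (1/2)) with (-1 * / 2) by field.
  rewrite Rpow_mult_distr, pow_inv, pow_add.
  pose proof (pow_nonzero 2 m ltac:(lra)); field; auto.
Qed.

Lemma eigenpair_frame_even u k : (1 <= u)%nat ->
  is_eigenpair (2 * u) (frame k) (1 + 2 ^ 1 / 2 ^ (2 * u)).
Proof.
  intro hu; replace (1 + _) with (1 - (- (1/2)) ^ (2 * u - 1)); [apply eigenpair_frame|].
  rewrite pow_neg_half; replace (2 * u - 1)%nat with (S (2 * (u - 1))) by lia.
  rewrite pow_1_odd; replace (S (2 * (u - 1)) + 1)%nat with (2 * u)%nat by lia; ring.
Qed.

Lemma eigenpair_opp_frame_even u k : (1 <= u)%nat ->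
  is_eigenpair (2 * u) (vscale (-1) (frame k)) (1 + 2 ^ 1 / 2 ^ (2 * u)).
Proof.
  intro hu; replace (1 + _) with ((-1) ^ (2 * u) * (1 + 2 ^ 1 / 2 ^ (2 * u)))
    by (rewrite pow_1_even; ring).
  apply eigenpair_opp; [lia | now apply eigenpair_frame_even].
Qed.

Lemma eigenpair_frame_odd u k :
  is_eigenpair (2 * u + 1) (frame k) (1 - 2 ^ 1 / 2 ^ (2 * u + 1)).
Proof.
  replace (1 - _) with (1 - (- (1/2)) ^ (2 * u + 1 - 1)); [apply eigenpair_frame|].
  replace (2 * u + 1 - 1)%nat with (2 * u)%nat by lia.
  now rewrite pow_neg_half, pow_1_even, Rmult_1_l.
Qed.

Lemma eigenpair_opp_frame_odd u k :
  is_eigenpair (2 * u + 1) (vscale (-1) (frame k)) (- (1 - 2 ^ 1 / 2 ^ (2 * u + 1))).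
Proof.
  replace (- _) with ((-1) ^ (2 * u + 1) * (1 - 2 ^ 1 / 2 ^ (2 * u + 1)))
    by (rewrite Nat.add_1_r, pow_1_odd; ring).
  apply eigenpair_opp; [lia | apply eigenpair_frame_odd].
Qed.

Lemma eigenpair_frame_mix_even u k j : (1 <= u)%nat -> k <> j ->
  is_eigenpair (2 * u) (frame_mix k j) (3 ^ u * (2 ^ 1 / 2 ^ (2 * u))).
Proof.
  intros hu hkj; replace (3 ^ u * _) with (3/2 * (3/4) ^ (u - 1)); [now apply eigenpair_frame_mix|].
  destruct u as [|w]; [lia|]; rewrite Nat.sub_1_r; simpl Nat.pred.
  replace (2 * S w)%nat with (2 * w + 2)%nat by lia.
  rewrite pow_add, pow_mult.
  replace (3 / 4) with (3 * / 2 ^ 2) by (simpl; field).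
  rewrite Rpow_mult_distr, pow_inv.
  pose proof (pow_nonzero (2 ^ 2) w ltac:(simpl; lra)).
  simpl; field; simpl in *; lra.
Qed.

Lemma eigenpair_even_iff u v mu : (3 <= u)%nat ->
  is_eigenpair (2 * u) v mu <->
  ((exists k, (v = frame k \/ v = vscale (-1) (frame k)) /\ mu = 1 + 2 ^ 1 / 2 ^ (2 * u)) \/
   (exists k j, k <> j /\ v = frame_mix k j /\ mu = 3 ^ u * (2 ^ 1 / 2 ^ (2 * u)))).
Proof.
  intro hu; split.
  - intro he; destruct (eigenpair_even_cases u v mu hu he) as [[k hk] | (k & j & hkj & ->)];
      [left | right].
    + exists k; split; [exact hk|].
      destruct hk as [-> | ->]; apply (eigenvalue_unique _ _ _ _ he);
        [apply eigenpair_frame_even | apply eigenpair_opp_frame_even]; lia.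
    + exists k, j; repeat split; [exact hkj|].
      apply (eigenvalue_unique _ _ _ _ he), eigenpair_frame_mix_even; [lia | exact hkj].
  - intros [(k & [-> | ->] & ->) | (k & j & hkj & -> & ->)].
    + apply eigenpair_frame_even; lia.
    + apply eigenpair_opp_frame_even; lia.
    + apply eigenpair_frame_mix_even; [lia | exact hkj].
Qed.

Lemma eigenpair_odd_iff u v mu : (1 <= u)%nat ->
  is_eigenpair (2 * u + 1) v mu <->
  (exists k, (v = frame k /\ mu = 1 - 2 ^ 1 / 2 ^ (2 * u + 1)) \/
             (v = vscale (-1) (frame k) /\ mu = - (1 - 2 ^ 1 / 2 ^ (2 * u + 1)))).
Proof.
  intro hu; split.
  - intro he; destruct (eigenpair_odd_cases u v mu hu he) as [k [-> | ->]];
      exists k; [left | right]; split; try reflexivity; apply (eigenvalue_unique _ _ _ _ he).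
    + apply eigenpair_frame_odd.
    + apply eigenpair_opp_frame_odd.
  - intros [k [[-> ->] | [-> ->]]]; [apply eigenpair_frame_odd | apply eigenpair_opp_frame_odd].
Qed.

Theorem mainTheorem8 :
  (* (i) d = 2 and d = 4 *)
  (forall v : vec2, vnorm v = 1 -> is_eigenpair 2 v (3/2)) /\
  (forall v : vec2, vnorm v = 1 -> is_eigenpair 4 v (9/8)) /\
  (* (ii) d >= 6 even *)
  (forall d : nat, (6 <= d)%nat -> Nat.Even d ->
     forall (v : vec2) (mu : R),
       is_eigenpair d v mu <->
       ((exists k : idx, (v = frame k \/ v = vscale (-1) (frame k)) /\
                         mu = 1 + 2 ^ 1 / 2 ^ d) \/
        (exists k j : idx, k <> j /\
           v = vscale (/ sqrt 3) (vadd (frame k) (vscale 2 (frame j))) /\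
           mu = 3 ^ (Nat.div d 2) * (2 ^ 1 / 2 ^ d)))) /\
  (* (iii) d >= 3 odd *)
  (forall d : nat, (3 <= d)%nat -> Nat.Odd d ->
     forall (v : vec2) (mu : R),
       is_eigenpair d v mu <->
       (exists k : idx,
          (v = frame k /\ mu = 1 - 2 ^ 1 / 2 ^ d) \/
          (v = vscale (-1) (frame k) /\ mu = - (1 - 2 ^ 1 / 2 ^ d)))).
Proof.
  split; [intros v hn; split; [exact hn | apply Tapply_2]|].
  split; [intros v hn; split; [exact hn|]; rewrite Tapply_4, (proj1 (vnorm_eq1 v) hn); f_equal; ring|].
  split.
  - intros d hd [u ->] v mu.
    replace (Nat.div (2 * u) 2) with u by (rewrite Nat.mul_comm, Nat.div_mul; lia).
    apply eigenpair_even_iff; lia.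
  - intros d hd [u ->] v mu.
    apply eigenpair_odd_iff; lia.
Qed.
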